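(* Let $\mathcal P$ be a finite set with $|\mathcal P|=n$, $\kappa\in(0,1)$, $\lambda>0$, $\ell_1,\ell_2,\dots:\mathcal P\to[0,1]$, $\mu_1(i)=\kappa$ for all $i$, $\Gamma$ the set of $\kappa$-dense measures on $\mathcal P$, and for $t\ge1$, $\mu_{t+1}=\Pi_\Gamma\tilde\mu_{t+1}$ with $\tilde\mu_{t+1}(i)=e^{-\lambda\sum_{s=1}^t\ell_s(i)}\mu_1(i)$. Writing $M(\hat\mu,Q_t)=\mathbb{E}_{i\sim\hat\mu}[\ell_t(i)]$, for every $T$ and every $\mu\in\Gamma$, \[ \sum_{t=1}^TM(\hat\mu_{t+1},Q_t)\le\sum_{t=1}^TM(\hat\mu,Q_t)+\frac{\mathrm{KL}(\mu\|\mu_1)}{\lambda\kappa n}. \]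
   Context: A measure on $\mathcal P$ is $\mu:\mathcal P\to[0,1]$; $|\mu|=\sum_i\mu(i)$; $\kappa$-dense means $|\mu|/n\ge\kappa$; $\hat\mu=\mu/|\mu|$. $\mathrm{KL}(\mu_1\|\mu_2)=\sum_i\mu_1(i)\log(\mu_1(i)/\mu_2(i))+\mu_2(i)-\mu_1(i)$. $\Pi_\Gamma\tilde\mu=\arg\min_{\mu\in\Gamma}\mathrm{KL}(\mu\|\tilde\mu)$. $Q_t$ is the column strategy of round $t$, inducing loss vector $\ell_t$. *)

From HB Require Import structures.
From mathcomp Require Import all_boot all_order all_algebra.
From mathcomp Require Import all_classical all_reals all_analysis.
Set Implicit Arguments. Unset Strict Implicit. Unset Printing Implicit Defensive.
Import Order.TTheory GRing.Theory Num.Theory.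
Local Open Scope ring_scope.

Section Defs.
Variables (R : realType) (P : finType).

Definition is_measure (mu : P -> R) : Prop := forall i, 0 <= mu i <= 1.

Definition mass (mu : P -> R) : R := \sum_(i : P) mu i.

Definition kdense (kappa : R) (mu : P -> R) : Prop :=
  is_measure mu /\ kappa <= mass mu / #|P|%:R.

Definition normalize (mu : P -> R) : P -> R := fun i => mu i / mass mu.

(* generalized KL divergence; the term mu1 i * ln (..) is 0 when mu1 i = 0 *)
Definition KL (mu1 mu2 : P -> R) : R :=
  \sum_(i : P) (mu1 i * ln (mu1 i / mu2 i) + mu2 i - mu1 i).

Definition is_KL_proj (kappa : R) (mut mu : P -> R) : Prop :=
  kdense kappa mu /\ forall nu, kdense kappa nu -> KL mu mut <= KL nu mut.

Definition Mloss (muhat lt : P -> R) : R := \sum_(i : P) muhat i * lt i.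

End Defs.

(* Exponential tilting shifts KL(x || .) linearly: KL(x || mu~_(t+1)) is
   lambda times the regularized loss KL(x || mu_1) / lambda + sum_(s <= t) <x, l_s>
   plus a constant independent of x.  So the projection mu_(t+1) minimizes the
   regularized loss over the kappa-dense measures, and the be-the-leader
   induction bounds sum_t <mu_(t+1), l_t> by the regularized loss of any
   kappa-dense measure.  Normalizing mu_(t+1) divides its loss by a mass of at
   least kappa n.  On the comparator side, nu is first shrunk to mass exactly
   kappa n = |mu_1|: this keeps its normalization and can only decrease
   KL(nu || mu_1). *)

From HB Require Import structures.
From mathcomp Require Import all_boot all_order all_algebra.
From mathcomp Require Import all_classical all_reals all_analysis.
From mathcomp Require Import ring lra.
Import Order.TTheory GRing.Theory Num.Theory.
Local Open Scope ring_scope.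

Lemma ln_le_subr1 {R : realType} {y : R} : 0 < y -> ln y <= y - 1.
Proof.
move=> y_gt0; have := @le_ln1Dx R (y - 1).
by rewrite addrCA subrr addr0; apply; lra.
Qed.

Section KullbackLeibler.
Context {R : realType} {P : finType}.
Implicit Types (x m w : P -> R) (kappa a k c : R).

Lemma KL_summand_ge0 a k : 0 <= a -> 0 < k -> 0 <= a * ln (a / k) + k - a.
Proof.
rewrite le_eqVlt => /predU1P[<- k_gt0|a_gt0 k_gt0]; first by rewrite mul0r; lra.
have := ler_wpM2l (ltW a_gt0) (ln_le_subr1 (divr_gt0 k_gt0 a_gt0)).
rewrite !ln_div ?posrE // mulrBr mulrBr mulr1 mulrCA divff ?gt_eqF // mulr1.
lra.
Qed.

Lemma KL_ge0 {x m} : (forall i, 0 <= x i) -> (forall i, 0 < m i) -> 0 <= KL x m.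
Proof. by move=> x_ge0 m_gt0; apply: sumr_ge0 => i _; exact: KL_summand_ge0. Qed.

Lemma KL_tilt x m w (lambda : R) :
  (forall i, 0 <= x i) -> (forall i, 0 < m i) ->
  KL x (fun i => expR (- lambda * w i) * m i) =
  KL x m + lambda * Mloss x w + \sum_i (expR (- lambda * w i) * m i - m i).
Proof.
move=> x_ge0 m_gt0; rewrite /KL /Mloss mulr_sumr -!big_split /=.
apply: eq_bigr => i _.
have [->|xi_neq0] := eqVneq (x i) 0; first by rewrite !mul0r; ring.
have xi_gt0 : 0 < x i by rewrite lt_def xi_neq0 x_ge0.
rewrite !ln_div ?posrE ?mulr_gt0 ?expR_gt0 // lnM ?posrE ?expR_gt0 // expRK.
ring.
Qed.

Lemma massZ x c : mass (fun i => c * x i) = c * mass x.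
Proof. by rewrite /mass mulr_sumr. Qed.

Lemma KL_scale_eq x m c : 0 < c -> (forall i, 0 <= x i) -> (forall i, 0 < m i) ->
  KL (fun i => c * x i) m = c * KL x m + c * ln c * mass x + (1 - c) * mass m.
Proof.
move=> c_gt0 x_ge0 m_gt0; rewrite /KL /mass !mulr_sumr -!big_split /=.
apply: eq_bigr => i _.
have [->|xi_neq0] := eqVneq (x i) 0; first by rewrite !(mulr0, mul0r); ring.
have xi_gt0 : 0 < x i by rewrite lt_def xi_neq0 x_ge0.
have -> : c * x i / m i = c * (x i / m i) by rewrite mulrA.
rewrite lnM ?posrE ?divr_gt0 //; ring.
Qed.

(* The gain is controlled by [-c ln c >= c (1 - c)] on [(0, 1]]. *)
Lemma KL_scale_le x m c : 0 < c <= 1 -> (forall i, 0 <= x i) -> (forall i, 0 < m i) ->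
  mass m <= c * mass x -> KL (fun i => c * x i) m <= KL x m.
Proof.
move=> /andP[c_gt0 c_le1] x_ge0 m_gt0 mass_le; rewrite KL_scale_eq //.
have KL_nneg := KL_ge0 x_ge0 m_gt0.
have mass_ge0 : 0 <= mass x by apply: sumr_ge0.
have ln_le := ln_le_subr1 c_gt0.
have KL_term : 0 <= (1 - c) * KL x m by apply: mulr_ge0; lra.
have ln_term : 0 <= (c - 1 - ln c) * (c * mass x) by apply: mulr_ge0; nra.
have mass_term : (1 - c) * mass m <= (1 - c) * (c * mass x) by apply: ler_wpM2l; lra.
nra.
Qed.

Lemma Mloss_ge0 x w : (forall i, 0 <= x i) -> (forall i, 0 <= w i) -> 0 <= Mloss x w.
Proof. by move=> x_ge0 w_ge0; apply: sumr_ge0 => i _; exact: mulr_ge0. Qed.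

Lemma Mloss_sumr x (l : nat -> P -> R) (a b : nat) :
  \sum_(a <= t < b) Mloss x (l t) = Mloss x (fun i => \sum_(a <= t < b) l t i).
Proof.
by rewrite /Mloss exchange_big /=; apply: eq_bigr => i _; rewrite mulr_sumr.
Qed.

Lemma Mloss_normalize x w : Mloss (normalize x) w = Mloss x w / mass x.
Proof. by rewrite /Mloss mulr_suml; apply: eq_bigr => i _; rewrite mulrAC. Qed.

Lemma Mloss_normalize_le x w a : 0 < a <= mass x -> 0 <= Mloss x w ->
  Mloss (normalize x) w <= Mloss x w / a.
Proof.
move=> /andP[a_gt0 a_le] Mloss_ge0; rewrite Mloss_normalize ler_wpM2l // lef_pV2 ?posrE //.
exact: lt_le_trans a_le.
Qed.

Lemma normalizeZ x c : c != 0 -> normalize (fun i => c * x i) = normalize x.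
Proof.
move=> c_neq0; apply/funext => i.
by rewrite /normalize massZ invfM mulrACA divff // mul1r.
Qed.

Lemma kdense_ge0 {kappa x} : kdense kappa x -> forall i, 0 <= x i.
Proof. by move=> [x_meas _] i; case/andP: (x_meas i). Qed.

(* [kappa <= mass x / 0 = 0] rules out an empty [P]. *)
Lemma kdense_card_gt0 {kappa x} : 0 < kappa -> kdense kappa x -> 0 < #|P|%:R :> R.
Proof.
move=> kappa_gt0 [_]; rewrite ltr0n lt0n; apply: contraTneq => ->.
by rewrite invr0 mulr0 -ltNge.
Qed.

Lemma kdense_mass {kappa x} : 0 < kappa -> kdense kappa x -> kappa * #|P|%:R <= mass x.
Proof.
move=> kappa_gt0 x_dense; have [_] := x_dense.
by rewrite ler_pdivlMr ?(kdense_card_gt0 kappa_gt0 x_dense).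
Qed.

Definition shrink kappa x : P -> R := fun i => kappa * #|P|%:R / mass x * x i.

Section Shrink.
Context {kappa : R} {x : P -> R}.
Hypotheses (kappa_gt0 : 0 < kappa) (x_dense : kdense kappa x).

Let n_gt0 : 0 < #|P|%:R :> R := kdense_card_gt0 kappa_gt0 x_dense.
Let mass_gt0 : 0 < mass x :=
  lt_le_trans (mulr_gt0 kappa_gt0 n_gt0) (kdense_mass kappa_gt0 x_dense).

Lemma shrink_ratio_in01 : 0 < kappa * #|P|%:R / mass x <= 1.
Proof.
by rewrite divr_gt0 ?mulr_gt0 ?ler_pdivrMr ?mul1r ?(kdense_mass kappa_gt0 x_dense).
Qed.

Let c_gt0 := proj1 (andP shrink_ratio_in01).
Let c_le1 := proj2 (andP shrink_ratio_in01).

Lemma mass_shrink : mass (shrink kappa x) = kappa * #|P|%:R.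
Proof. by rewrite massZ divfK ?gt_eqF. Qed.

Lemma kdense_shrink : kdense kappa (shrink kappa x).
Proof.
split; last by rewrite mass_shrink mulfK ?gt_eqF.
move=> i; have [x_meas _] := x_dense; have /andP[xi_ge0 xi_le1] := x_meas i.
apply/andP; split; first by apply: mulr_ge0 => //; exact: ltW.
by apply: mulr_ile1 => //; exact: ltW.
Qed.

Lemma normalize_shrink : normalize (shrink kappa x) = normalize x.
Proof. exact: normalizeZ (lt0r_neq0 c_gt0). Qed.

Lemma KL_shrink_le m : (forall i, m i = kappa) -> KL (shrink kappa x) m <= KL x m.
Proof.
move=> mE; apply: KL_scale_le (kdense_ge0 x_dense) _ _.
- by rewrite c_gt0 c_le1.
- by move=> i; rewrite mE.
- have -> : mass m = kappa * #|P|%:R.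
    by rewrite /mass (eq_bigr _ (fun i _ => mE i)) sumr_const mulr_natr.
  by rewrite divfK ?gt_eqF.
Qed.

End Shrink.

End KullbackLeibler.

Section BeTheLeader.
Variables (R : realType) (P : finType) (kappa lambda : R).
Variables (l : nat -> P -> R) (mu : nat -> P -> R).
Hypotheses (kappa_gt0 : 0 < kappa) (lambda_gt0 : 0 < lambda).
Hypothesis mu1E : forall i, mu 1%N i = kappa.
Hypothesis mu_proj : forall t, (1 <= t)%N ->
  is_KL_proj kappa
    (fun i => expR (- lambda * \sum_(1 <= s < t.+1) l s i) * mu 1%N i) (mu t.+1).

Definition reg_loss (x : P -> R) (T : nat) : R :=
  KL x (mu 1%N) / lambda + \sum_(1 <= t < T.+1) Mloss x (l t).

Let mu1_gt0 i : 0 < mu 1%N i. Proof. by rewrite mu1E. Qed.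

Lemma proj_minimizes_reg_loss T x : (1 <= T)%N -> kdense kappa x ->
  reg_loss (mu T.+1) T <= reg_loss x T.
Proof.
move=> T_ge1 x_dense; have [mu_dense mu_min] := mu_proj _ T_ge1.
set tilted := fun i => expR (- lambda * \sum_(1 <= s < T.+1) l s i) * mu 1%N i.
have reg_lossE y : kdense kappa y ->
    reg_loss y T = (KL y tilted - \sum_i (tilted i - mu 1%N i)) / lambda.
  move=> y_dense; rewrite (KL_tilt _ _ _ _ (kdense_ge0 y_dense) mu1_gt0) addrK.
  by rewrite /reg_loss Mloss_sumr mulrDl mulrAC divff ?gt_eqF // mul1r.
by rewrite !reg_lossE // ler_pM2r ?invr_gt0 // lerD2r mu_min.
Qed.

Lemma be_the_leader T x : kdense kappa x ->
  \sum_(1 <= t < T.+1) Mloss (mu t.+1) (l t) <= reg_loss x T.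
Proof.
elim: T x => [|T IH] x x_dense.
  rewrite /reg_loss !big_geq // addr0.
  by apply: divr_ge0; [exact: KL_ge0 (kdense_ge0 x_dense) mu1_gt0 | exact: ltW].
have [mu_dense _] := mu_proj _ (ltn0Sn T).
apply: le_trans _ (proj_minimizes_reg_loss _ _ (ltn0Sn T) x_dense).
rewrite big_nat_recr //= /reg_loss [in X in _ <= X]big_nat_recr //= addrA lerD2r.
exact: IH mu_dense.
Qed.

End BeTheLeader.

Theorem mainTheorem8 (R : realType) (P : finType) (kappa lambda : R)
  (l : nat -> P -> R) (mu : nat -> P -> R) :
  0 < kappa < 1 -> 0 < lambda ->
  (forall t i, (1 <= t)%N -> 0 <= l t i <= 1) ->
  (forall i, mu 1%N i = kappa) ->
  (forall t, (1 <= t)%N ->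
     is_KL_proj kappa
       (fun i => expR (- lambda * \sum_(1 <= s < t.+1) l s i) * mu 1%N i)
       (mu t.+1)) ->
  forall (T : nat) (nu : P -> R), kdense kappa nu ->
    \sum_(1 <= t < T.+1) Mloss (normalize (mu t.+1)) (l t)
    <= \sum_(1 <= t < T.+1) Mloss (normalize nu) (l t)
       + KL nu (mu 1%N) / (lambda * kappa * #|P|%:R).
Proof.
move=> /andP[kappa_gt0 _] lambda_gt0 l_bound mu1E mu_proj T nu nu_dense.
have kn_gt0 := mulr_gt0 kappa_gt0 (kdense_card_gt0 kappa_gt0 nu_dense).
have loss_le t : (1 <= t < T.+1)%N ->
    Mloss (normalize (mu t.+1)) (l t) <= Mloss (mu t.+1) (l t) / (kappa * #|P|%:R).
  move=> /andP[t_ge1 _]; have [mu_dense _] := mu_proj t t_ge1.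
  rewrite Mloss_normalize_le ?kn_gt0 ?(kdense_mass kappa_gt0) //.
  apply: Mloss_ge0; first exact: kdense_ge0 mu_dense.
  by move=> i; have /andP[] := l_bound t i t_ge1.
apply: le_trans (ler_sum_nat loss_le) _; rewrite -mulr_suml.
have kn_inv_ge0 : 0 <= (kappa * #|P|%:R)^-1 by rewrite invr_ge0 ltW.
have btl := be_the_leader _ _ _ _ _ _ kappa_gt0 lambda_gt0 mu1E mu_proj T _
  (kdense_shrink kappa_gt0 nu_dense).
apply: le_trans (ler_wpM2r kn_inv_ge0 btl) _.
rewrite /reg_loss mulrDl addrC -(normalize_shrink kappa_gt0 nu_dense) mulr_suml.
under eq_bigr => t _ do rewrite -(mass_shrink kappa_gt0 nu_dense) -Mloss_normalize.
rewrite lerD2l -[in X in _ <= X]mulrA [in X in _ <= X]invfM [in X in _ <= X]mulrA.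
by rewrite !ler_pM2r ?invr_gt0 // KL_shrink_le.
Qed.
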